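(* Let $\mathcal{M}=(S,E,T)$ be a trivially parametric Markov chain in which every non-target state has at least two successors. Then there is a trivially parametric Markov chain $\mathcal{N}=(S',E',T)$ with $S\subseteq S'$ and $|sE'|=2$ for all $s\in S'\setminus T$, such that for every graph-preserving valuation $\mathsf{val}$ of $\mathcal{M}$ there is a graph-preserving valuation $\mathsf{val}'$ of $\mathcal{N}$ with $\mathbb{P}^s_{\mathcal{M}^{\mathsf{val}}}[\Diamond\mathit{fin}]=\mathbb{P}^s_{\mathcal{N}^{\mathsf{val}'}}[\Diamond\mathit{fin}]$ for all $s\in S$, and conversely for every graph-preserving valuation $\mathsf{val}'$ of $\mathcal{N}$ there is a graph-preserving valuation $\mathsf{val}$ of $\mathcal{M}$ with the same equalities.
   Context: A trivially parametric Markov chain $\mathcal{M}=(S,E,T)$ consists of a finite set of states $S$, targets $T=\{\mathit{fin},\mathit{fail}\}$ with no outgoing edges, and edges $E\subseteq (S\setminus T)\times S$; $sE$ is the successor set of $s$. A graph-preserving valuation assigns to each non-target $s$ a probability distribution with full support on $sE$; the resulting Markov chain is $\mathcal{M}^{\mathsf{val}}$, and $\mathbb{P}^s_{\mathcal{M}^{\mathsf{val}}}[\Diamond\mathit{fin}]$ is the probability of reaching $\mathit{fin}$ from $s$ in it. *)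

From HB Require Import structures.
From mathcomp Require Import all_boot all_order all_algebra.
From mathcomp Require Import classical_sets reals.
Set Implicit Arguments. Unset Strict Implicit. Unset Printing Implicit Defensive.
Import Order.TTheory GRing.Theory Num.Theory.
Local Open Scope ring_scope.

(* A trivially parametric Markov chain (S, E, T) with T = {fin, fail}:
   S a finite type of states, fin <> fail, E : rel S the edge relation,
   and the targets have no outgoing edges. *)
Definition is_tpMC (S : finType) (fin fail : S) (E : rel S) : Prop :=
  fin != fail /\ (forall t, E fin t = false /\ E fail t = false).

Definition is_target (S : finType) (fin fail : S) (s : S) : bool :=
  (s == fin) || (s == fail).

Definition succs (S : finType) (E : rel S) (s : S) : {set S} := [set t | E s t].

Definition graph_preserving (R : realType) (S : finType) (fin fail : S)
  (E : rel S) (val : S -> S -> R) : Prop :=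
  forall s, ~~ is_target fin fail s ->
    (forall t, E s t -> 0 < val s t) /\
    (forall t, ~~ E s t -> val s t = 0) /\
    \sum_(t : S) val s t = 1.

Fixpoint reach_within (R : realType) (S : finType) (fin fail : S)
  (val : S -> S -> R) (n : nat) (s : S) : R :=
  if is_target fin fail s then (s == fin)%:R
  else match n with
       | 0 => 0
       | n'.+1 => \sum_(t : S) val s t * reach_within fin fail val n' t
       end.

Definition reach_prob (R : realType) (S : finType) (fin fail : S)
  (val : S -> S -> R) (s : S) : R :=
  sup (range (fun n => reach_within fin fail val n s)).

From HB Require Import structures.
From mathcomp Require Import all_boot all_order all_algebra.
From mathcomp Require Import classical_sets reals.
From mathcomp Require Import ring.
Import Order.TTheory GRing.Theory Num.Theory.
Local Open Scope ring_scope.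
Set Implicit Arguments. Unset Strict Implicit. Unset Printing Implicit Defensive.

(* Each non-target s with successors a_1, ..., a_k is unfolded into a chain of
   k - 1 binary nodes: the i-th node moves to a_i or to the next node, the last
   one to a_(k-1) or a_k.  A distribution p on sE becomes the branching
   probabilities p(a_i) / (p(a_i) + ... + p(a_k)); conversely, arbitrary
   branching probabilities define, as the probabilities of leaving the chain
   towards each a_i, a distribution on sE with full support.  Either way the
   chain of s is left towards a_i with probability p(a_i), after between 1 and
   |S| steps, so n-step reachability in the original chain is squeezed between
   the binary one at n steps and at n * |S| steps, and the suprema agree. *)

Definition stochastic (R : realType) (T : finType) (fin fail : T)
    (v : T -> T -> R) : Prop :=
  forall s, ~~ is_target fin fail s -> (forall t, 0 <= v s t) /\ \sum_t v s t = 1.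

Lemma graph_preserving_stochastic (R : realType) (T : finType) (fin fail : T)
    (E : rel T) (v : T -> T -> R) :
  graph_preserving fin fail E v -> stochastic fin fail v.
Proof.
move=> gp s /gp [v_gt0 [v_eq0 v_sum]]; split=> // t.
by case: (boolP (E s t)) => [/v_gt0/ltW | /v_eq0 ->].
Qed.

Section ReachWithin.
Variables (R : realType) (T : finType) (fin fail : T) (v : T -> T -> R).
Local Notation rw := (reach_within fin fail v).

Lemma reach_within_target n s : is_target fin fail s -> rw n s = (s == fin)%:R.
Proof. by case: n => [|n] /= ->. Qed.

Lemma reach_within0 s : ~~ is_target fin fail s -> rw 0 s = 0.
Proof. by move=> /negbTE /= ->. Qed.

Lemma reach_withinS n s :
  ~~ is_target fin fail s -> rw n.+1 s = \sum_t v s t * rw n t.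
Proof. by move=> /negbTE /= ->. Qed.

Hypothesis v_stoch : stochastic fin fail v.

Lemma reach_within_bounds n s : 0 <= rw n s <= 1.
Proof.
elim: n s => [|n IH] s; have [s_tgt|s_ntgt] := boolP (is_target fin fail s).
- by rewrite reach_within_target // ler0n lern1 leq_b1.
- by rewrite reach_within0 // lexx ler01.
- by rewrite reach_within_target // ler0n lern1 leq_b1.
- have [v_ge0 v_sum] := v_stoch s_ntgt.
  rewrite reach_withinS // sumr_ge0 => [|t _]; last first.
    by rewrite mulr_ge0 //; case/andP: (IH t).
  rewrite -v_sum ler_sum // => t _.
  by rewrite ler_piMr //; case/andP: (IH t).
Qed.

Lemma reach_within_ge0 n s : 0 <= rw n s.
Proof. by case/andP: (reach_within_bounds n s). Qed.

Lemma reach_within_le1 n s : rw n s <= 1.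
Proof. by case/andP: (reach_within_bounds n s). Qed.

Lemma reach_within_le_succ n s : rw n s <= rw n.+1 s.
Proof.
elim: n s => [|n IH] s; have [s_tgt|s_ntgt] := boolP (is_target fin fail s).
- by rewrite !reach_within_target.
- by rewrite reach_within0 // reach_within_ge0.
- by rewrite !reach_within_target.
- have [v_ge0 _] := v_stoch s_ntgt.
  by rewrite !reach_withinS // ler_sum // => t _; rewrite ler_wpM2l.
Qed.

Lemma reach_within_le m n s : (m <= n)%N -> rw m s <= rw n s.
Proof.
move=> /subnKC <-; elim: (n - m)%N => [|k IH]; first by rewrite addn0.
by rewrite addnS (le_trans IH) // reach_within_le_succ.
Qed.

End ReachWithin.

Lemma sup_range_eq (R : realType) (f g : nat -> R) :
  has_ubound (range f) ->
  (forall n, exists m, f n <= g m) -> (forall n, exists m, g n <= f m) ->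
  sup (range f) = sup (range g).
Proof.
move=> [b ub_f] fg gf.
have ub_g : ubound (range g) b.
  by move=> _ [n _ <-]; have [m /le_trans -> //] := gf n; apply: ub_f; exists m.
have cofinal (h k : nat -> R) :
    (forall n, exists m, h n <= k m) -> (range h `<=` down (range k))%classic.
  by move=> hk _ [n _ <-]; have [m le_nm] := hk n; apply/downP; exists (k m).
have nonempty (h : nat -> R) : (range h !=set0)%classic by exists (h 0%N), 0%N.
apply/eqP; rewrite eq_le !sup_le //; first [exact: cofinal | by split; last exists b].
Qed.

Section Binarization.
Variables (S : finType) (fin fail : S) (E : rel S).
Implicit Types (s t : S) (A : {set S}).

Definition binstate : finType := (S + S * {set S})%type.

Definition pivot (A : {set S}) : S := odflt fin [pick t in A].
Definition rest (A : {set S}) : {set S} := A :\ pivot A.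

Definition gadget_next (s : S) (A : {set S}) : binstate :=
  if (2 < #|A|)%N then inr (s, rest A) else inl (pivot (rest A)).

Definition gadget_edge (s : S) (A : {set S}) (y : binstate) : bool :=
  (y == inl (pivot A)) || (y == gadget_next s A).

(* [inl s] starts the chain for [succs E s]; [inr (s, A)] is the chain node
   still to choose among [A].  The nodes [inr (s, A)] with [#|A| < 2] are
   unreachable; they branch to fin and fail only to keep the graph binary. *)
Definition label (x : binstate) : S * {set S} :=
  match x with
  | inl s => (s, succs E s)
  | inr (s, A) => (s, if (2 <= #|A|)%N then A else [set fin; fail])
  end.

Definition binE (x y : binstate) : bool :=
  ~~ is_target (inl fin) (inl fail) x && gadget_edge (label x).1 (label x).2 y.

Lemma pivot_in (A : {set S}) : (0 < #|A|)%N -> pivot A \in A.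
Proof.
rewrite /pivot; case: pickP => [t //|A0].
by rewrite card_gt0 => /set0Pn [t]; rewrite A0.
Qed.

Lemma card_rest (A : {set S}) : (0 < #|A|)%N -> #|A| = #|rest A|.+1.
Proof. by move=> /pivot_in pA; rewrite (cardsD1 (pivot A)) pA. Qed.

Lemma in_rest (A : {set S}) t : (t \in rest A) = (t != pivot A) && (t \in A).
Proof. by rewrite !inE. Qed.

Lemma pivot_neq_next s (A : {set S}) :
  (2 <= #|A|)%N -> inl (pivot A) != gadget_next s A.
Proof.
move=> A2; rewrite /gadget_next; case: ifP => // _.
have A0 : (0 < #|A|)%N by apply: leq_trans A2.
have : (0 < #|rest A|)%N by rewrite -ltnS -card_rest.
move=> /pivot_in; rewrite in_rest => /andP [ne _].
by apply: contra ne => /eqP [->].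
Qed.

Lemma card_gadget_edge s (A : {set S}) :
  (2 <= #|A|)%N -> #|[set y | gadget_edge s A y]| = 2%N.
Proof.
move=> A2; have -> : [set y | gadget_edge s A y] = [set inl (pivot A); gadget_next s A].
  by apply/setP => y; rewrite !inE.
by rewrite cards2 pivot_neq_next.
Qed.

Hypothesis tpMC : is_tpMC fin fail E.
Hypothesis succs_ge2 : forall s, ~~ is_target fin fail s -> (2 <= #|succs E s|)%N.

Local Notation is_bin_target := (is_target (inl fin) (inl fail)).

Definition is_gadget (x : binstate) (s : S) (A : {set S}) : Prop :=
  (2 <= #|A|)%N /\ binE x =1 gadget_edge s A.

Lemma label_gadget x : ~~ is_bin_target x -> is_gadget x (label x).1 (label x).2.
Proof.
move=> x_ntgt; split; last by move=> y; rewrite /binE x_ntgt.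
case: x x_ntgt => [s|[s A]] /=; first exact: succs_ge2.
case: ifP => [-> // | _ _]; rewrite cards2.
by case: tpMC => ->.
Qed.

Lemma gadget_top s : ~~ is_target fin fail s -> is_gadget (inl s) s (succs E s).
Proof. exact: (@label_gadget (inl s)). Qed.

Lemma gadget_rest x s A :
  is_gadget x s A -> (2 < #|A|)%N -> is_gadget (inr (s, rest A)) s (rest A).
Proof.
move=> [A2 _] A3; have rest2 : (2 <= #|rest A|)%N.
  by rewrite -ltnS -card_rest // (leq_trans _ A2).
by split=> // y; rewrite /binE /= rest2.
Qed.

Lemma gadget_nontarget x s A : is_gadget x s A -> ~~ is_bin_target x.
Proof.
by move=> [_ /(_ (inl (pivot A)))]; rewrite /binE /gadget_edge eqxx => /andP [].
Qed.

Lemma binE_tpMC : is_tpMC (inl fin) (inl fail) binE.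
Proof.
case: tpMC => fin_fail _; split=> // t.
by rewrite /binE /is_target !eqxx orbT.
Qed.

Lemma card_succs_binE x : ~~ is_bin_target x -> #|succs binE x| = 2%N.
Proof.
move=> /label_gadget [A2 gE]; rewrite -(card_gadget_edge (label x).1 A2).
by apply: eq_card => y; rewrite !inE gE.
Qed.

Lemma gadget_ind s (P : binstate -> {set S} -> Prop) :
  (forall x A, is_gadget x s A -> ~~ (2 < #|A|)%N -> P x A) ->
  (forall x A, is_gadget x s A -> (2 < #|A|)%N ->
     P (inr (s, rest A)) (rest A) -> P x A) ->
  forall x A, is_gadget x s A -> P x A.
Proof.
move=> base step x A; have [n] := ubnP #|A|.
elim: n x A => // n IH x A /ltnSE An xg.
have [A3|A3] := boolP (2 < #|A|)%N; last exact: base.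
apply: step => //; apply: IH (gadget_rest xg A3).
by rewrite -ltnS -card_rest ?(leq_trans _ A3).
Qed.

Section Exit.
Variables (R : realType) (val' : binstate -> binstate -> R).
Hypothesis val'_gp : graph_preserving (inl fin) (inl fail) binE val'.

Let val'_stoch := graph_preserving_stochastic val'_gp.
Local Notation rw' := (reach_within (inl fin) (inl fail) val').

Lemma binE_inl x s A t : is_gadget x s A ->
  binE x (inl t) = if (2 < #|A|)%N then t == pivot A else t \in A.
Proof.
move=> [A2 gE]; rewrite gE /gadget_edge /gadget_next.
case: ifP => A3; first by rewrite orbF (inj_eq inl_inj).
have A0 : (0 < #|A|)%N by apply: leq_trans A2.
have rest1 : #|rest A| = 1%N.
  by apply/eqP; rewrite -eqSS -card_rest // eqn_leq A2 leqNgt A3.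
have [u rest_u] := mem_card1 rest1.
have := pivot_in (A := rest A); rewrite rest1 rest_u => /(_ isT) /eqP ->.
have := rest_u t; rewrite in_rest inE !(inj_eq inl_inj) => <-.
by case: (t =P pivot A) => [->|] //=; rewrite pivot_in.
Qed.

Lemma binE_inr x s A p : is_gadget x s A ->
  binE x (inr p) = (2 < #|A|)%N && (p == (s, rest A)).
Proof. by move=> [_ gE]; rewrite gE /gadget_edge /gadget_next; case: ifP. Qed.

Lemma sum_gadget x s A (g : binstate -> R) : is_gadget x s A ->
  \sum_y val' x y * g y = \sum_t val' x (inl t) * g (inl t) +
    (if (2 < #|A|)%N then val' x (inr (s, rest A)) * g (inr (s, rest A)) else 0).
Proof.
move=> xg; have [_ [val'_eq0 _]] := val'_gp (gadget_nontarget xg).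
rewrite big_sumType /=; congr (_ + _).
case: ifP => A3.
  rewrite (bigD1 (s, rest A)) //= big1 ?addr0 // => p ne_p.
  by rewrite val'_eq0 ?mul0r // (binE_inr _ xg) A3 ne_p.
by rewrite big1 // => p _; rewrite val'_eq0 ?mul0r // (binE_inr _ xg) A3.
Qed.

(* The probability that the chain for [(s, A)], entered at [x], is left
   towards [inl t]; the fuel [#|A|] bounds the length of the chain. *)
Fixpoint exit_within (n : nat) (x : binstate) (s : S) (A : {set S}) (t : S) : R :=
  val' x (inl t) +
  if n is n'.+1 then
    if (2 < #|A|)%N then
      val' x (inr (s, rest A)) * exit_within n' (inr (s, rest A)) s (rest A) t
    else 0
  else 0.

Definition exit_prob (x : binstate) (s : S) (A : {set S}) (t : S) : R :=
  exit_within #|A| x s A t.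

Lemma exit_probE x s A t : (0 < #|A|)%N ->
  exit_prob x s A t = val' x (inl t) +
    (if (2 < #|A|)%N then
       val' x (inr (s, rest A)) * exit_prob (inr (s, rest A)) s (rest A) t
     else 0).
Proof. by move=> A0; rewrite /exit_prob {1}(card_rest A0). Qed.

Lemma sum_exit_prob x s A (g : S -> R) : is_gadget x s A ->
  \sum_t exit_prob x s A t * g t = \sum_t val' x (inl t) * g t +
    (if (2 < #|A|)%N then
       val' x (inr (s, rest A)) * \sum_t exit_prob (inr (s, rest A)) s (rest A) t * g t
     else 0).
Proof.
move=> [A2 _]; have A0 : (0 < #|A|)%N by apply: leq_trans A2.
under eq_bigr do rewrite exit_probE // mulrDl.
rewrite big_split /=; congr (_ + _); case: ifP => _.
  by rewrite mulr_sumr; under [RHS]eq_bigr do rewrite mulrA.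
by rewrite big1 // => t; rewrite mul0r.
Qed.

Lemma reach_within_gadget x s A m : is_gadget x s A ->
  rw' m.+1 x = \sum_t val' x (inl t) * rw' m (inl t) +
    (if (2 < #|A|)%N then val' x (inr (s, rest A)) * rw' m (inr (s, rest A)) else 0).
Proof. by move=> xg; rewrite reach_withinS ?(sum_gadget _ xg) ?(gadget_nontarget xg). Qed.

Lemma exit_prob_distr x s A : is_gadget x s A ->
  [/\ forall t, t \in A -> 0 < exit_prob x s A t,
      forall t, t \notin A -> exit_prob x s A t = 0
    & \sum_t exit_prob x s A t = 1].
Proof.
move: x A; apply: gadget_ind => x A xg A3 => [|[IH_gt0 IH_eq0 IH_sum]];
  have [val'_gt0 [val'_eq0 val'_sum]] := val'_gp (gadget_nontarget xg);
  rewrite -{}val'_sum; under [RHS]eq_bigr do rewrite -[val' x _]mulr1;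
  rewrite (sum_gadget _ xg); under eq_bigr do rewrite -[exit_prob _ _ _ _]mulr1;
  rewrite (sum_exit_prob _ xg).
- have exitE t : exit_prob x s A t = val' x (inl t).
    by rewrite exit_probE ?(negbTE A3) ?addr0 // (leq_trans _ xg.1).
  rewrite (negbTE A3); split=> // t tA; rewrite exitE.
    by rewrite val'_gt0 // (binE_inl _ xg) (negbTE A3).
  by rewrite val'_eq0 // (binE_inl _ xg) (negbTE A3).
- have IH_sum1 : \sum_t exit_prob (inr (s, rest A)) s (rest A) t * 1 = 1.
    by under eq_bigr do rewrite mulr1.
  rewrite A3 IH_sum1.
  set c := val' x (inr (s, rest A)).
  have c_gt0 : 0 < c by rewrite val'_gt0 // (binE_inr _ xg) A3 eqxx.
  have pivot_gt0 : 0 < val' x (inl (pivot A)).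
    by rewrite val'_gt0 // (binE_inl _ xg) A3 eqxx.
  have val'_eq0_nonpivot t : t != pivot A -> val' x (inl t) = 0.
    by move=> tP; rewrite val'_eq0 // (binE_inl _ xg) A3.
  have exitE t : exit_prob x s A t =
      val' x (inl t) + c * exit_prob (inr (s, rest A)) s (rest A) t.
    by rewrite exit_probE ?A3 // (leq_trans _ xg.1).
  have exit'_ge0 t : 0 <= exit_prob (inr (s, rest A)) s (rest A) t.
    by case: (boolP (t \in rest A)) => [/IH_gt0/ltW | /IH_eq0 ->].
  split=> // [t tA | t tA]; rewrite exitE.
    case: (eqVneq t (pivot A)) => [-> | tP]; first by rewrite ltr_wpDr // mulr_ge0 // ltW.
    by rewrite val'_eq0_nonpivot // add0r mulr_gt0 // IH_gt0 // in_rest tP.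
  have tP : t != pivot A.
    by apply: contraNneq tA => ->; rewrite pivot_in // (leq_trans _ xg.1).
  by rewrite val'_eq0_nonpivot // IH_eq0 ?mulr0 ?addr0 // in_rest (negbTE tA) andbF.
Qed.

Lemma exit_prob_ge0 x s A t : is_gadget x s A -> 0 <= exit_prob x s A t.
Proof.
move=> /exit_prob_distr [exit_gt0 exit_eq0 _].
by case: (boolP (t \in A)) => [/exit_gt0/ltW | /exit_eq0 ->].
Qed.

Lemma reach_within_exit_le x s A m : is_gadget x s A ->
  rw' m.+1 x <= \sum_t exit_prob x s A t * rw' m (inl t).
Proof.
move: x A; apply: gadget_ind => x A xg A3 => [|IH];
  rewrite (reach_within_gadget _ xg) (sum_exit_prob _ xg); first by rewrite (negbTE A3).
have [val'_ge0 _] := val'_stoch (gadget_nontarget xg).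
rewrite A3 lerD2l ler_wpM2l // (le_trans _ IH) //.
exact: reach_within_le_succ.
Qed.

Lemma exit_le_reach_within x s A m : is_gadget x s A ->
  \sum_t exit_prob x s A t * rw' m (inl t) <= rw' (m + #|A|) x.
Proof.
have val'_le y k : ~~ is_bin_target y ->
    \sum_t val' y (inl t) * rw' m (inl t) <= \sum_t val' y (inl t) * rw' (m + k) (inl t).
  move=> /val'_stoch [val'_ge0 _]; apply: ler_sum => t _.
  by rewrite ler_wpM2l // reach_within_le // leq_addr.
move: x A; apply: gadget_ind => x A xg A3 => [|IH];
  have x_ntgt := gadget_nontarget xg; have [val'_ge0 _] := val'_stoch x_ntgt;
  rewrite (card_rest (leq_trans _ xg.1)) // addnS;
  rewrite (reach_within_gadget _ xg) (sum_exit_prob _ xg).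
- by rewrite (negbTE A3) !addr0 val'_le.
- by rewrite A3 lerD ?val'_le ?ler_wpM2l.
Qed.

Section ExitValuation.
Variable val : S -> S -> R.
Hypothesis val_exit : forall s t, ~~ is_target fin fail s ->
  val s t = exit_prob (inl s) s (succs E s) t.
Local Notation rw := (reach_within fin fail val).

Lemma reach_within_bin_le n s : rw' n (inl s) <= rw n s.
Proof.
elim: n s => [|n IH] s; have [s_tgt|s_ntgt] := boolP (is_target fin fail s).
- by rewrite !reach_within_target.
- by rewrite !reach_within0.
- by rewrite !reach_within_target.
- have sg := gadget_top s_ntgt.
  rewrite (le_trans (reach_within_exit_le _ sg)) // reach_withinS //.
  apply: ler_sum => t _; rewrite -val_exit // ler_wpM2l //.
  by rewrite val_exit // (exit_prob_ge0 _ sg).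
Qed.

Lemma reach_within_le_bin n s : rw n s <= rw' (n * #|S|) (inl s).
Proof.
elim: n s => [|n IH] s; have [s_tgt|s_ntgt] := boolP (is_target fin fail s).
- by rewrite !reach_within_target.
- by rewrite reach_within0 // reach_within_ge0.
- by rewrite !reach_within_target.
- have sg := gadget_top s_ntgt.
  have le_idx : (n * #|S| + #|succs E s| <= n.+1 * #|S|)%N.
    by rewrite mulSn addnC leq_add2r max_card.
  rewrite reach_withinS //; apply: le_trans (reach_within_le val'_stoch _ le_idx).
  apply: le_trans (exit_le_reach_within _ sg); apply: ler_sum => t _.
  by rewrite val_exit // ler_wpM2l // (exit_prob_ge0 _ sg).
Qed.

Lemma reach_prob_bin s :
  reach_prob fin fail val s = reach_prob (inl fin) (inl fail) val' (inl s).
Proof.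
symmetry; apply: sup_range_eq => [|n|n].
- by exists 1 => _ [n _ <-]; apply: reach_within_le1.
- by exists n; apply: reach_within_bin_le.
- by exists (n * #|S|)%N; apply: reach_within_le_bin.
Qed.

End ExitValuation.

Definition exit_val s t : R :=
  if is_target fin fail s then 0 else exit_prob (inl s) s (succs E s) t.

Lemma exit_val_gp : graph_preserving fin fail E exit_val.
Proof.
move=> s s_ntgt; rewrite /exit_val (negbTE s_ntgt).
have [exit_gt0 exit_eq0 exit_sum] := exit_prob_distr (gadget_top s_ntgt).
split=> [t Est | ]; first by apply: exit_gt0; rewrite inE.
by split=> // t nEst; apply: exit_eq0; rewrite inE.
Qed.

End Exit.

Section Splitting.
Variables (R : realType) (val : S -> S -> R).
Hypothesis val_gp : graph_preserving fin fail E val.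

(* [weight] equals [val] on the successors of a non-target and is positive
   everywhere, so every chain node, reachable or not, branches with
   probabilities in (0, 1). *)
Definition weight s t : R := if 0 < val s t then val s t else 1.

Definition split_prob s A : R := weight s (pivot A) / \sum_(t in A) weight s t.

Definition bin_val (x y : binstate) : R :=
  let: (s, A) := label x in
  if binE x y then
    if y == inl (pivot A) then split_prob s A else 1 - split_prob s A
  else 0.

Lemma weight_gt0 s t : 0 < weight s t.
Proof. by rewrite /weight; case: ifP. Qed.

Lemma sum_weight_gt0 s A : (0 < #|A|)%N -> 0 < \sum_(t in A) weight s t.
Proof.
move=> A0; rewrite (big_setD1 (pivot A)) ?pivot_in //=.
by rewrite ltr_pwDl ?weight_gt0 // sumr_ge0 // => t _; rewrite ltW ?weight_gt0.
Qed.

Lemma sum_weight_pivot s A : (0 < #|A|)%N ->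
  \sum_(t in A) weight s t = weight s (pivot A) + \sum_(t in rest A) weight s t.
Proof. by move=> A0; rewrite (big_setD1 (pivot A)) ?pivot_in. Qed.

Lemma split_probC s A : (0 < #|A|)%N ->
  1 - split_prob s A = (\sum_(t in rest A) weight s t) / \sum_(t in A) weight s t.
Proof.
move=> A0; have := sum_weight_gt0 s A0; rewrite /split_prob sum_weight_pivot //.
by move=> /lt0r_neq0 W0; field.
Qed.

Lemma split_prob_bounds s A : (2 <= #|A|)%N -> 0 < split_prob s A < 1.
Proof.
move=> A2; have A0 : (0 < #|A|)%N by apply: leq_trans A2.
have rest0 : (0 < #|rest A|)%N by rewrite -ltnS -card_rest.
rewrite divr_gt0 ?weight_gt0 ?sum_weight_gt0 //= -subr_gt0 split_probC //.
by rewrite divr_gt0 ?sum_weight_gt0.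
Qed.

Lemma bin_val_gp : graph_preserving (inl fin) (inl fail) binE bin_val.
Proof.
move=> x x_ntgt; have [A2 gE] := label_gadget x_ntgt.
rewrite /bin_val; case: (label x) A2 gE => s A /= A2 gE.
have /andP [q_gt0 q_lt1] := split_prob_bounds s A2.
split; [|split] => [y | y |]; first by case: ifP => // _; case: ifP; rewrite ?subr_gt0.
  by move=> /negbTE ->.
rewrite -big_mkcond (eq_bigl (mem [set inl (pivot A); gadget_next s A])).
  have /negbTE next_neq := pivot_neq_next s A2; rewrite eq_sym in next_neq.
  by rewrite big_setU1 ?big_set1 ?inE ?pivot_neq_next //= eqxx next_neq addrC subrK.
by move=> y; rewrite gE !inE.
Qed.

Lemma exit_prob_bin_val x s A t : is_gadget x s A -> label x = (s, A) ->
  exit_prob bin_val x s A t = (t \in A)%:R * weight s t / \sum_(u in A) weight s u.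
Proof.
move: x A; apply: gadget_ind => x A xg A3 => [|IH] lx;
  have A0 : (0 < #|A|)%N := leq_trans (ltn0Sn 1) xg.1;
  have W_gt0 := sum_weight_gt0 s A0;
  rewrite exit_probE // /bin_val lx (binE_inl _ xg) (inj_eq inl_inj).
- rewrite (negbTE A3) addr0; case: (boolP (t \in A)) => tA; last by rewrite !mul0r.
  rewrite mul1r; case: eqVneq => [-> // | tP].
  have rest1 : #|rest A| = 1%N.
    by apply/eqP; rewrite -eqSS -card_rest // eqn_leq xg.1 leqNgt A3.
  have /cards1P [u rest_u] : #|rest A| == 1%N by rewrite rest1.
  have : t \in rest A by rewrite in_rest tP.
  by rewrite split_probC // rest_u big_set1 inE => /eqP ->.
- have rest2 := (gadget_rest xg A3).1.
  rewrite A3 (binE_inr _ xg) A3 eqxx /= IH //=; last by rewrite rest2.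
  have W'_gt0 : 0 < \sum_(u in rest A) weight s u.
    by rewrite sum_weight_gt0 // (leq_trans _ rest2).
  rewrite split_probC // in_rest; case: eqVneq => [-> | tP] /=.
    by rewrite pivot_in // !mul0r mulr0 addr0 mul1r.
  by rewrite add0r; field; rewrite !lt0r_neq0.
Qed.

Lemma exit_prob_bin_val_top s t : ~~ is_target fin fail s ->
  exit_prob bin_val (inl s) s (succs E s) t = val s t.
Proof.
move=> s_ntgt; have [val_gt0 [val_eq0 val_sum]] := val_gp s_ntgt.
have weight_val u : u \in succs E s -> weight s u = val s u.
  by rewrite inE => /val_gt0; rewrite /weight => ->.
have W1 : \sum_(u in succs E s) weight s u = 1.
  rewrite -val_sum big_mkcond; apply: eq_bigr => u _.
  by case: ifPn => [/weight_val | ]; rewrite // inE => /val_eq0.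
rewrite (exit_prob_bin_val t (gadget_top s_ntgt)) // W1 divr1.
case: (boolP (t \in succs E s)) => [tE | ]; first by rewrite mul1r weight_val.
by rewrite inE => /val_eq0 ->; rewrite mul0r.
Qed.

End Splitting.

End Binarization.

Theorem lemma13 (S : finType) (fin fail : S) (E : rel S) :
  is_tpMC fin fail E ->
  (forall s : S, ~~ is_target fin fail s -> (2 <= #|succs E s|)%N) ->
  exists (S' : finType) (fin' fail' : S') (E' : rel S') (emb : S -> S'),
    [/\ is_tpMC fin' fail' E',
        [/\ injective emb, emb fin = fin' & emb fail = fail'],
        (forall s' : S', ~~ is_target fin' fail' s' -> #|succs E' s'| = 2%N)
      & forall R : realType,
        (forall val : S -> S -> R, graph_preserving fin fail E val ->
           exists val' : S' -> S' -> R, graph_preserving fin' fail' E' val' /\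
             forall s : S, reach_prob fin fail val s = reach_prob fin' fail' val' (emb s)) /\
        (forall val' : S' -> S' -> R, graph_preserving fin' fail' E' val' ->
           exists val : S -> S -> R, graph_preserving fin fail E val /\
             forall s : S, reach_prob fin fail val s = reach_prob fin' fail' val' (emb s))].
Proof.
move=> tpMC succs_ge2.
exists (binstate S), (inl fin), (inl fail), (binE fin fail E), inl; split.
- exact: binE_tpMC.
- by split=> //; apply: inl_inj.
- exact: card_succs_binE.
- move=> R; split=> [val val_gp | val' val'_gp].
  + have val'_gp := bin_val_gp tpMC succs_ge2 val.
    exists (bin_val fin fail E val); split=> // s.
    apply: (reach_prob_bin tpMC succs_ge2 val'_gp) => {}s t s_ntgt.
    by rewrite exit_prob_bin_val_top.
  + exists (exit_val fin fail E val'); split; first exact: exit_val_gp.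
    apply: (reach_prob_bin tpMC succs_ge2 val'_gp) => s t /negbTE s_ntgt.
    by rewrite /exit_val s_ntgt.
Qed.
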